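(* Let $\mathcal{H}$ be a separable Hilbert space and $H$ a positive Hermitian operator on $\mathcal{H}$ with purely discrete spectrum, such that there is no infinite-dimensional subspace on which $H$ is bounded. For $E>0$ let $\mathcal{P}(E)$ be the set of density operators $\rho$ on $\mathcal{H}$ with $\mathrm{Tr}\,\rho H\le E$. Then every sequence in $\mathcal{P}(E)$ has a subsequence that is Cauchy with respect to the Hilbert–Schmidt norm.
   Context: A density operator is a Hermitian, positive semidefinite, trace-class operator of trace 1. $\|A\|_2=\sqrt{\mathrm{Tr}\,A^\dagger A}$ is the Hilbert–Schmidt norm. For positive $\rho$, $\mathrm{Tr}\,\rho H=\sum_n\langle n|\rho|n\rangle E_n$ in an eigenbasis of $H$. *)

From HB Require Import structures.
From mathcomp Require Import all_boot all_order all_algebra.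
From mathcomp Require Import all_classical all_reals.
From mathcomp Require Import ereal esum.
From mathcomp Require Import complex.

Set Implicit Arguments.
Unset Strict Implicit.
Unset Printing Implicit Defensive.

Import Order.TTheory GRing.Theory Num.Theory.
Local Open Scope classical_set_scope.
Local Open Scope ring_scope.

(* The separable Hilbert space is modelled, in an orthonormal eigenbasis
   of H indexed by a countable type I, as l^2(I; R[i]).  Vectors are
   coefficient families  v : I -> R[i],  operators are matrices
   A : I -> I -> R[i]  (A i j = <i|A|j>). *)

Section Defs.
Variables (R : realType) (I : countType).
Local Notation C := R[i].

Definition sqmod (z : C) : R := complex.Re z ^+ 2 + complex.Im z ^+ 2.

Definition l2norm2 (v : I -> C) : \bar R :=
  \esum_(i in [set: I]) (sqmod (v i))%:E.

Definition in_l2 (v : I -> C) : Prop := (l2norm2 v < +oo)%E.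

(* H = diag(Ev) in the eigenbasis: ||H v||^2 = sum_i Ev_i^2 |v_i|^2 *)
Definition Hnorm2 (Ev : I -> R) (v : I -> C) : \bar R :=
  \esum_(i in [set: I]) (Ev i ^+ 2 * sqmod (v i))%:E.

Definition in_dom (Ev : I -> R) (v : I -> C) : Prop :=
  in_l2 v /\ (Hnorm2 Ev v < +oo)%E.

Definition lin_subspace (V : set (I -> C)) : Prop :=
  V (fun=> 0) /\
  (forall (a : C) (u v : I -> C), V u -> V v -> V (fun i => a * u i + v i)).

Definition lin_indep (n : nat) (f : 'I_n -> I -> C) : Prop :=
  forall c : 'I_n -> C,
    (forall i, \sum_(k < n) c k * f k i = 0) -> forall k, c k = 0.

Definition infinite_dim (V : set (I -> C)) : Prop :=
  forall n : nat, exists f : 'I_n -> I -> C,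
    (forall k, V (f k)) /\ lin_indep f.

Definition H_bounded_on (Ev : I -> R) (V : set (I -> C)) : Prop :=
  (forall v, V v -> in_dom Ev v) /\
  exists c : R, forall v, V v -> (Hnorm2 Ev v <= (c ^+ 2)%:E * l2norm2 v)%E.

Definition no_inf_dim_bounded_subspace (Ev : I -> R) : Prop :=
  forall V : set (I -> C),
    lin_subspace V -> H_bounded_on Ev V -> ~ infinite_dim V.

(* density operator: Hermitian, positive semidefinite, trace class with
   trace 1 (for a positive operator, trace class <=> sum of diagonal
   entries finite) *)
Definition hermitian (A : I -> I -> C) : Prop :=
  forall i j, A j i = (A i j)^*%C.

Definition psd (A : I -> I -> C) : Prop :=
  forall (s : seq I) (x : I -> C),
    0 <= \sum_(i <- s) \sum_(j <- s) (x i)^*%C * A i j * x j.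

Definition trace_pos (A : I -> I -> C) : \bar R :=
  \esum_(i in [set: I]) (complex.Re (A i i))%:E.

Definition density (rho : I -> I -> C) : Prop :=
  hermitian rho /\ psd rho /\ trace_pos rho = 1%E.

(* Tr rho H = sum_n <n|rho|n> E_n *)
Definition energy (Ev : I -> R) (rho : I -> I -> C) : \bar R :=
  \esum_(i in [set: I]) (complex.Re (rho i i) * Ev i)%:E.

Definition PE (Ev : I -> R) (En : R) : set (I -> I -> C) :=
  [set rho | density rho /\ (energy Ev rho <= En%:E)%E].

Definition hs_norm2 (A : I -> I -> C) : \bar R :=
  \esum_(p in [set: I * I]) (sqmod (A p.1 p.2))%:E.

Definition hs_norm (A : I -> I -> C) : \bar R :=
  if (hs_norm2 A < +oo)%E then (Num.sqrt (fine (hs_norm2 A)))%:E else +oo%E.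

Definition hs_cauchy (u : nat -> I -> I -> C) : Prop :=
  forall eps : R, 0 < eps -> exists N : nat, forall m n : nat,
    (N <= m)%N -> (N <= n)%N ->
    (hs_norm (fun i j => (u m i j - u n i j)%R) < eps%:E)%E.

End Defs.

(* Two estimates, uniform over P(E), combine with entrywise compactness.
   Positivity gives |rho_ij|^2 <= rho_ii rho_jj, and Markov's inequality
   bounds the diagonal mass of rho on the levels E_i > M by E/M; hence the
   Hilbert-Schmidt mass of rho outside the block F x F, F = {i | E_i <= M},
   is at most 2E/M.  The spectral hypothesis makes F finite, since H is
   bounded by M on the span of the eigenvectors indexed by F.  All entries
   of a density operator have modulus at most 1, so Bolzano-Weierstrass and
   a diagonal argument give a subsequence along which every entry converges,
   hence along which the finitely many entries of the block are eventually
   uniformly close. *)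

From HB Require Import structures.
From mathcomp Require Import all_boot all_order all_algebra.
From mathcomp Require Import all_classical all_reals.
From mathcomp Require Import ereal esum.
From mathcomp Require Import complex.
From mathcomp Require Import ring lra sequences normedtype.
From mathcomp Require finmap.
Import numFieldNormedType.Exports.
Import Order.TTheory GRing.Theory Num.Theory.
Local Open Scope classical_set_scope.
Local Open Scope ring_scope.

Section Sqmod.
Context {R : realType}.
Implicit Types (x y z : R[i]) (e : R).

Lemma sqmod_ge0 z : 0 <= sqmod z.
Proof. by rewrite addr_ge0 ?sqr_ge0. Qed.

Lemma sqmodB_le x y : sqmod (x - y) <= 2 * sqmod x + 2 * sqmod y.
Proof.
case: x y => a b [c d]; rewrite /sqmod /=.
have := sqr_ge0 (a + c); have := sqr_ge0 (b + d); nra.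
Qed.

Lemma sqmod_le1 z : sqmod z <= 1 -> `|complex.Re z| <= 1 /\ `|complex.Im z| <= 1.
Proof. case: z => a b; rewrite /sqmod /= !ler_norml => h; split; apply/andP; split; nra. Qed.

Lemma ReB x y : complex.Re (x - y) = complex.Re x - complex.Re y.
Proof. by case: x y => a b [c d]. Qed.

Lemma ImB x y : complex.Im (x - y) = complex.Im x - complex.Im y.
Proof. by case: x y => a b [c d]. Qed.

Lemma sqmod_le_ReIm z e :
  `|complex.Re z| <= e -> `|complex.Im z| <= e -> sqmod z <= 2 * e ^+ 2.
Proof. case: z => a b; rewrite /sqmod /= !ler_norml => /andP[? ?] /andP[? ?]; nra. Qed.
End Sqmod.

Lemma le_mul_of_quadratic_ge0 (R : realFieldType) (a c p : R) :
  0 <= a -> 0 <= c -> (forall s, 0 <= a * s ^+ 2 - 2 * s * p + p * c) -> p <= a * c.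
Proof.
move=> a0 c0 q; have [a_eq0|an0] := eqVneq a 0.
  by have := q (c + 1); rewrite a_eq0 !mul0r; nra.
have := mulr_ge0 a0 (q (p / a)); set t := p / a.
have -> : a * (a * t ^+ 2 - 2 * t * p + p * c) = p * (a * c - p).
  have at_p : a * t = p by rewrite /t mulrC divfK.
  by clearbody t; rewrite -at_p; ring.
have [p_le0 _|p_gt0] := leP p 0; first exact: le_trans p_le0 (mulr_ge0 a0 c0).
by move=> ?; rewrite -subr_ge0 -(pmulr_rge0 _ p_gt0).
Qed.

Lemma uniq_allpairs_pair [T : eqType] [s : seq T] :
  uniq s -> uniq [seq (i, j) | i <- s, j <- s].
Proof. by move=> us; apply: allpairs_uniq => // -[? ?] [? ?]. Qed.

Section FiniteSums.
Context {R : realType}.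

Lemma sum_le_uniq_sub [T : eqType] [g : T -> R] [t u : seq T] :
  (forall x, 0 <= g x) -> uniq t -> uniq u -> {subset t <= u} ->
  \sum_(x <- t) g x <= \sum_(x <- u) g x.
Proof.
move=> g0 ut uu tu.
rewrite -(perm_big _ (permEl (perm_filterC (mem t) u))) big_cat /=.
have -> : \sum_(x <- [seq x <- u | mem t x]) g x = \sum_(x <- t) g x.
  apply: perm_big; apply: uniq_perm; rewrite ?filter_uniq // => x.
  by rewrite mem_filter; apply/andP/idP => [[]|xt] //; split => //; exact: tu.
by rewrite lerDl sumr_ge0.
Qed.

Lemma esum_le_of_uniq_sums (T : choiceType) (a : T -> \bar R) (c : \bar R) :
  (forall s : seq T, uniq s -> (\sum_(x <- s) a x <= c)%E) ->
  (\esum_(x in [set: T]) a x <= c)%E.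
Proof.
move=> H; apply: ge_ereal_sup => _ [X [finX _] <-].
by rewrite fsbig_finite //; apply: H; exact: finmap.fset_uniq.
Qed.

Lemma uniq_sum_le_esum (T : choiceType) (a : T -> \bar R) (s : seq T) : uniq s ->
  (\sum_(x <- s) a x <= \esum_(x in [set: T]) a x)%E.
Proof. by move=> us; apply: esum_ge; exists [set` s]; rewrite -?fsbig_seq. Qed.

Lemma esum_le_sum_support (T : choiceType) (a : T -> R) (s : seq T) :
  (forall x, 0 <= a x) -> (forall x, x \notin s -> a x = 0) ->
  (\esum_(x in [set: T]) (a x)%:E <= (\sum_(x <- undup s) a x)%:E)%E.
Proof.
move=> a0 a_out; apply: esum_le_of_uniq_sums => t ut; rewrite sumEFin lee_fin.
rewrite (bigID (mem s)) /= [X in _ + X]big1 ?addr0 => [|x /a_out //].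
rewrite -big_filter; apply: sum_le_uniq_sub; rewrite ?filter_uniq ?undup_uniq //.
by move=> x; rewrite mem_filter mem_undup => /andP[].
Qed.
End FiniteSums.

Section Density.
Context {R : realType} {I : countType}.
Implicit Types rho : I -> I -> R[i].

Lemma density_diag {rho} : density rho -> forall i,
  complex.Im (rho i i) = 0 /\ 0 <= complex.Re (rho i i).
Proof.
case=> _ [psd_rho _] i; have := psd_rho [:: i] (fun=> 1).
by rewrite !big_seq1 conjc1 mul1r mulr1 lecE /= => /andP[/eqP <- ->].
Qed.

Lemma density_offdiag_le {rho} : density rho -> forall i j,
  sqmod (rho i j) <= complex.Re (rho i i) * complex.Re (rho j j).
Proof.
move=> rho_d i j; have [<-|ij] := eqVneq i j.
  by have [Im0 _] := density_diag rho_d i; rewrite /sqmod Im0 expr0n addr0 expr2.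
have [herm [psd_rho _]] := rho_d.
have [Imi ?] := density_diag rho_d i; have [Imj ?] := density_diag rho_d j.
(* positivity on the vector (s, - conj rho_ij) supported on {i, j} *)
apply: le_mul_of_quadratic_ge0 => // s.
have := psd_rho [:: i; j] (fun k => if k == i then s%:C%C else - (rho i j)^*%C).
rewrite !big_cons !big_nil eqxx eq_sym (negbTE ij) !addr0 lecE (herm i j) => /andP[_].
move: Imi Imj; rewrite /sqmod.
case: (rho i i) (rho j j) (rho i j) => a a' [c c'] [b b'] /= -> ->.
rewrite /real_complex_def; simpc => /=.
lra.
Qed.

Lemma density_diag_sum_le1 {rho} : density rho -> forall s, uniq s ->
  \sum_(i <- s) complex.Re (rho i i) <= 1.
Proof.
case=> _ [_ tr1] s us; rewrite -lee_fin -sumEFin -tr1; exact: uniq_sum_le_esum.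
Qed.

Lemma density_entry_le1 {rho} : density rho -> forall i j, sqmod (rho i j) <= 1.
Proof.
move=> rho_d i j; apply: le_trans (density_offdiag_le rho_d i j) _.
have diag_le1 k : complex.Re (rho k k) <= 1.
  by have := density_diag_sum_le1 rho_d [:: k]; rewrite big_seq1; apply.
by rewrite mulr_ile1 ?diag_le1 ?(density_diag rho_d i).2 ?(density_diag rho_d j).2.
Qed.

Lemma energy_sum_le [Ev : I -> R] [En : R] [rho s] : PE Ev En rho -> uniq s ->
  \sum_(i <- s) complex.Re (rho i i) * Ev i <= En.
Proof.
case=> _ HE us; rewrite -lee_fin -sumEFin; apply: le_trans HE.
exact: uniq_sum_le_esum.
Qed.
End Density.

Section FiniteSpan.
Context {R : realType} {I : countType}.
Local Notation C := R[i].

Definition fin_span (A : set I) : set (I -> C) :=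
  [set v | exists2 s : seq I, (forall i, i \in s -> A i) &
                              (forall i, i \notin s -> v i = 0)].

Lemma fin_span_subspace A : lin_subspace (fin_span A).
Proof.
split; first by exists [::].
move=> a u v [su suA su0] [sv svA sv0]; exists (su ++ sv).
  by move=> i; rewrite mem_cat => /orP[/suA|/svA].
by move=> i; rewrite mem_cat negb_or => /andP[/su0 -> /sv0 ->]; rewrite mulr0 addr0.
Qed.

Lemma fin_span_bounded (Ev : I -> R) (M : R) : (forall i, 0 <= Ev i) ->
  H_bounded_on Ev (fin_span [set i | Ev i <= M]).
Proof.
move=> Ev_ge0.
have Hnorm2_le v s : (forall i, i \notin s -> v i = 0) ->
    (Hnorm2 Ev v <= (\sum_(i <- undup s) Ev i ^+ 2 * sqmod (v i))%:E)%E.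
  move=> v0; apply: esum_le_sum_support => [i|i /v0 ->].
    by rewrite mulr_ge0 ?sqr_ge0 ?sqmod_ge0.
  by rewrite /sqmod expr0n addr0 mulr0.
split=> [v [s _ v0]|].
  split; apply: le_lt_trans (ltry _); last exact: Hnorm2_le v0.
  apply: esum_le_sum_support => [i|i /v0 ->]; first exact: sqmod_ge0.
  by rewrite /sqmod expr0n addr0.
exists M => v [s sM v0]; apply: le_trans (Hnorm2_le v s v0) _.
apply: (@le_trans _ _ ((M ^+ 2 * \sum_(i <- undup s) sqmod (v i))%:E)).
  rewrite lee_fin mulr_sumr big_seq [X in _ <= X]big_seq; apply: ler_sum => i.
  rewrite mem_undup => /sM /= iM; apply: ler_wpM2r; first exact: sqmod_ge0.
  by rewrite ler_sqr ?nnegrE // (le_trans (Ev_ge0 i)).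
rewrite EFinM lee_wpmul2l ?lee_fin ?sqr_ge0 // -sumEFin.
exact: uniq_sum_le_esum (undup_uniq s).
Qed.

Lemma unit_vectors_lin_indep n (s : n.-tuple I) : uniq s ->
  lin_indep (fun k i => (i == tnth s k)%:R : C).
Proof.
move=> /tuple_uniqP s_inj c c0 k; have := c0 (tnth s k).
rewrite (bigD1 k) //= eqxx mulr1 big1 ?addr0 // => l lk.
by rewrite (inj_eq s_inj) eq_sym (negbTE lk) mulr0.
Qed.

Lemma fin_span_infinite_dim (A : set I) :
  (forall s : seq I, exists2 i, A i & i \notin s) -> infinite_dim (fin_span A).
Proof.
move=> A_inf n.
have [s [us ss sA]] : exists s : seq I,
    [/\ uniq s, size s == n & forall i, i \in s -> A i].
  elim: n => [|n [s [us /eqP ss sA]]]; first by exists [::].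
  have [i Ai i_s] := A_inf s; exists (i :: s); split; rewrite /= ?i_s ?ss //.
  by move=> x; rewrite inE => /orP[/eqP->|/sA].
exists (fun k i => (i == tnth (Tuple ss) k)%:R); split; last first.
  exact: unit_vectors_lin_indep.
move=> k; exists s => // i i_s; case: eqP => // ik.
by move: i_s; rewrite ik (mem_tnth k (Tuple ss)).
Qed.

Lemma low_energy_finite [Ev : I -> R] : (forall i, 0 <= Ev i) ->
  no_inf_dim_bounded_subspace Ev ->
  forall M, exists F : seq I, forall i, Ev i <= M -> i \in F.
Proof.
move=> Ev_ge0 no_inf M; apply: contrapT => F_none.
apply: (no_inf _ (fin_span_subspace _) (fin_span_bounded _ M Ev_ge0)).
apply: fin_span_infinite_dim => s; apply: contrapT => s_all; apply: F_none.
by exists s => i iM; apply: contrapT => /negP i_s; apply: s_all; exists i.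
Qed.
End FiniteSpan.

Lemma homo_ltn_ge_id [f : nat -> nat] :
  {homo f : m n / (m < n)%N} -> forall n, (n <= f n)%N.
Proof. by move=> f_incr; elim=> // n IH; exact: leq_ltn_trans IH (f_incr _ _ (ltnSn n)). Qed.

Section NestedSubsequences.
Variable S : nat -> (nat -> nat) -> nat -> nat.
Hypothesis S_incr : forall n psi, {homo S n psi : k l / (k < l)%N}.

Fixpoint nest n : nat -> nat :=
  if n is n'.+1 then nest n' \o S n' (nest n') else id.

Lemma nest_incr n : {homo nest n : k l / (k < l)%N}.
Proof. by elim: n => [//|n IH] k l kl; apply/IH/S_incr. Qed.

Lemma nest_tail a b : (a <= b)%N ->
  forall x, exists2 y, (x <= y)%N & nest b x = nest a y.
Proof.
move/subnK <-; elim: (b - a)%N => [|d IH] x; first by exists x.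
have [y xy eq_y] := IH (S (d + a) (nest (d + a)) x).
exists y; last by rewrite -eq_y.
exact: leq_trans (homo_ltn_ge_id (S_incr _ _) x) xy.
Qed.

Definition diagonal k := nest k.+1 k.

Lemma diagonal_incr k : (diagonal k < diagonal k.+1)%N.
Proof. exact/nest_incr/(leq_trans _ (homo_ltn_ge_id (S_incr _ _) k.+1)). Qed.

Lemma diagonal_tail [c m : nat] : (c <= m)%N ->
  exists2 y, (m <= y)%N & diagonal m = nest c.+1 y.
Proof. by move=> cm; apply: nest_tail. Qed.
End NestedSubsequences.

Section DiagonalArgument.
Context {R : realType}.

Lemma cvgn_cauchy (w : nat -> R) : cvgn w -> forall eta : R, 0 < eta ->
  exists N, forall m n, (N <= m)%N -> (N <= n)%N -> `|w m - w n| <= eta.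
Proof.
move=> /cvg_ex[l w_l] eta eta0.
have [N _ HN] := cvgr_dist_le _ _ w_l (eta / 2) (divr_gt0 eta0 (ltr0Sn _ 1)).
exists N => m n Nm Nn; rewrite (_ : w m - w n = (l - w n) - (l - w m)); last by ring.
by apply: le_trans (ler_normB _ _) _; rewrite (splitr eta) lerD ?HN.
Qed.

Lemma diagonal_subsequence (u : nat -> nat -> R) : (forall c, bounded_fun (u c)) ->
  exists2 phi : nat -> nat, (forall k, (phi k < phi k.+1)%N) &
  forall c (eta : R), 0 < eta -> exists N, forall m n, (N <= m)%N -> (N <= n)%N ->
    `|u c (phi m) - u c (phi n)| <= eta.
Proof.
move=> u_bnd.
have step (p : nat * (nat -> nat)) : exists sg : nat -> nat,
    {homo sg : k l / (k < l)%N} /\ cvgn (u p.1 \o p.2 \o sg).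
  case: p => c psi /=.
  have psi_bnd : bounded_fun (u c \o psi).
    have := u_bnd c; rewrite /= /bounded_near; apply: filterS => M uM k _.
    exact: uM.
  have [sg /increasing_seqP sg_incr sg_cvg] := bolzano_weierstrass psi_bnd.
  by exists sg; split => //; apply: homo_ltn sg_incr; exact: ltn_trans.
have [S' S'_spec] := choice step.
pose S c psi := S' (c, psi).
have S_incr c psi : {homo S c psi : k l / (k < l)%N} := (S'_spec (c, psi)).1.
exists (diagonal S); first exact: diagonal_incr.
move=> c eta eta0; have [N HN] := cvgn_cauchy _ (S'_spec (c, nest S c)).2 _ eta0.
exists (maxn N c) => m n; rewrite !geq_max => /andP[Nm cm] /andP[Nn cn].
have [ym mym ->] := diagonal_tail _ S_incr cm.
have [yn nyn ->] := diagonal_tail _ S_incr cn.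
by apply: HN; [exact: leq_trans mym | exact: leq_trans nyn].
Qed.

Lemma countable_diagonal_subsequence (T : countType) (u : T -> nat -> R) :
  (forall t, bounded_fun (u t)) ->
  exists2 phi : nat -> nat, (forall k, (phi k < phi k.+1)%N) &
  forall t (eta : R), 0 < eta -> exists N, forall m n, (N <= m)%N -> (N <= n)%N ->
    `|u t (phi m) - u t (phi n)| <= eta.
Proof.
move=> u_bnd; pose v c := if unpickle c is Some t then u t else fun=> 0.
have v_bnd c : bounded_fun (v c).
  by rewrite /v; case: (unpickle c) => [t|]; [exact: u_bnd | exact: bounded_cst].
have [phi phi_incr v_phi] := diagonal_subsequence _ v_bnd.
by exists phi => // t; have := v_phi (pickle t); rewrite /v pickleK.
Qed.
End DiagonalArgument.

Section EntrywiseConvergence.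
Context {R : realType} {I : countType}.
Local Notation C := R[i].

Lemma density_entrywise_cauchy [rho : nat -> I -> I -> C] :
  (forall k, density (rho k)) ->
  exists2 phi : nat -> nat, (forall k, (phi k < phi k.+1)%N) &
  forall i j (delta : R), 0 < delta -> exists N, forall m n, (N <= m)%N -> (N <= n)%N ->
    sqmod (rho (phi m) i j - rho (phi n) i j) <= delta.
Proof.
move=> rho_d.
pose u (t : (I * I) * bool) k :=
  let: ((i, j), b) := t in
  if b then complex.Re (rho k i j) else complex.Im (rho k i j).
have u_bnd t : bounded_fun (u t).
  rewrite /= /bounded_near; near=> B => k _ /=; apply: (@le_trans _ _ 1).
    by case: t => -[i j] [] /=; case: (sqmod_le1 _ (density_entry_le1 (rho_d k) i j)).
  by near: B; apply: nbhs_pinfty_ge; exact: num_real.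
have [phi phi_incr u_phi] := countable_diagonal_subsequence _ _ u_bnd.
exists phi => // i j delta delta0; pose eta := Num.sqrt (delta / 2).
have eta0 : 0 < eta by rewrite sqrtr_gt0 divr_gt0.
have [N1 H1] := u_phi ((i, j), true) eta eta0.
have [N2 H2] := u_phi ((i, j), false) eta eta0.
exists (maxn N1 N2) => m n; rewrite !geq_max => /andP[m1 m2] /andP[n1 n2].
have -> : delta = 2 * eta ^+ 2 by rewrite sqr_sqrtr ?divr_ge0 ?ltW // mulrC divfK.
by apply: sqmod_le_ReIm; rewrite (ReB, ImB); [exact: H1 | exact: H2].
Unshelve. all: by end_near.
Qed.
End EntrywiseConvergence.

Lemma eventually2_in_seq [T : eqType] (P : T -> nat -> nat -> Prop) (l : seq T) :
  (forall x, exists N, forall m n, (N <= m)%N -> (N <= n)%N -> P x m n) ->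
  exists N, forall x, x \in l -> forall m n, (N <= m)%N -> (N <= n)%N -> P x m n.
Proof.
move=> HP; elim: l => [|x l [N2 H2]]; first by exists 0%N.
have [N1 H1] := HP x; exists (maxn N1 N2) => y; rewrite inE.
by case/orP=> [/eqP-> | yl] m n; rewrite !geq_max => /andP[? ?] /andP[? ?]; auto.
Qed.

Section HilbertSchmidtEstimate.
Context {R : realType} {I : countType} {Ev : I -> R} {En : R}.
Hypothesis Ev_ge0 : forall i, 0 <= Ev i.
Local Notation C := R[i].
Implicit Types (rho : I -> I -> C) (X : seq (I * I)).

Definition in_block (F : seq I) (p : I * I) := (p.1 \in F) && (p.2 \in F).

Lemma block_sum_le (F : seq I) (g : I * I -> R) X (delta : R) : uniq X ->
  (forall p, 0 <= g p) -> (forall i j, i \in F -> j \in F -> g (i, j) <= delta) ->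
  \sum_(p <- X | in_block F p) g p <= (size (undup F))%:R ^+ 2 * delta.
Proof.
move=> uX g0 g_le; rewrite -big_filter.
have uF := undup_uniq F.
apply: le_trans (sum_le_uniq_sub g0 (filter_uniq _ uX) (uniq_allpairs_pair uF) _) _.
  move=> [i j]; rewrite mem_filter /in_block /= => /andP[/andP[iF jF] _].
  by apply: allpairs_f; rewrite mem_undup.
rewrite big_allpairs; apply: le_trans (_ : _ <= \sum_(i <- undup F) \sum_(j <- undup F) delta) _.
  by do 2!(rewrite big_seq [X in _ <= X]big_seq; apply: ler_sum => ? /[!mem_undup] ?); exact: g_le.
by rewrite !big_const_seq !count_predT !iter_addr_0 -mulrnA -(mulr_natl delta) natrM expr2.
Qed.

Section LowEnergyIndices.
Context {F : seq I} {M : R}.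
Hypotheses (M_gt0 : 0 < M) (F_low : forall i, i \notin F -> M < Ev i).

Lemma tail_mass_le rho s : PE Ev En rho -> uniq s ->
  \sum_(i <- s | i \notin F) complex.Re (rho i i) <= En / M.
Proof.
move=> rhoP us; have d_ge0 i := (density_diag rhoP.1 i).2.
rewrite ler_pdivlMr // mulrC mulr_sumr; apply: le_trans (energy_sum_le rhoP us).
rewrite [X in _ <= X](bigID (fun i => i \notin F)) /= -[X in X <= _]addr0 lerD //.
  by apply: ler_sum => i /F_low /ltW; rewrite mulrC; exact: ler_wpM2l.
by apply: sumr_ge0 => i _; exact: mulr_ge0.
Qed.

Lemma off_block_sum_le [rho X] : PE Ev En rho -> uniq X ->
  \sum_(p <- X | ~~ in_block F p) sqmod (rho p.1 p.2) <= 2 * En / M.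
Proof.
move=> rhoP uX; have rho_d := rhoP.1; pose d i := complex.Re (rho i i).
have d_ge0 i : 0 <= d i := (density_diag rho_d i).2.
pose t i := if i \notin F then d i else 0.
have t_ge0 i : 0 <= t i by rewrite /t; case: ifP.
pose S := undup (map fst X ++ map snd X); have uS : uniq S := undup_uniq _.
rewrite big_mkcond /=.
apply: le_trans (sum_le_uniq_sub _ uX (uniq_allpairs_pair uS) _) _.
- by move=> p; case: ifP => // _; exact: sqmod_ge0.
- move=> [i j] ijX; apply: allpairs_f; rewrite mem_undup mem_cat.
    by apply/orP; left; apply/mapP; exists (i, j).
  by apply/orP; right; apply/mapP; exists (i, j).
rewrite big_allpairs.
apply: le_trans (_ : _ <= \sum_(i <- S) \sum_(j <- S) (t i * d j + d i * t j)) _.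
  (* a pair outside F x F has an index outside F *)
  apply: ler_sum => i _; apply: ler_sum => j _.
  have := density_offdiag_le rho_d i j; have := d_ge0 i; have := d_ge0 j.
  by rewrite /in_block /t /d /=; case: (i \in F) (j \in F) => [] [] /=; nra.
have tS : \sum_(i <- S) t i <= En / M by rewrite -big_mkcond; exact: tail_mass_le.
have dS : \sum_(i <- S) d i <= 1 by exact: density_diag_sum_le1.
have sum_ge0 (f : I -> R) : (forall i, 0 <= f i) -> 0 <= \sum_(i <- S) f i.
  by move=> f0; exact: sumr_ge0.
rewrite (_ : \sum_(i <- S) _ = (\sum_(i <- S) t i) * (\sum_(j <- S) d j) +
                              (\sum_(i <- S) d i) * (\sum_(j <- S) t j)).
  apply: le_trans (lerD (ler_pM _ _ tS dS) (ler_pM _ _ dS tS)) _; rewrite ?sum_ge0 //.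
  lra.
rewrite !mulr_suml -big_split; apply: eq_bigr => i _.
by rewrite !mulr_sumr -big_split.
Qed.

Lemma hs_norm2_sub_le [rho1 rho2] [delta : R] : PE Ev En rho1 -> PE Ev En rho2 ->
  0 <= delta -> (forall i j, i \in F -> j \in F -> sqmod (rho1 i j - rho2 i j) <= delta) ->
  (hs_norm2 (fun i j => (rho1 i j - rho2 i j)%R) <=
     ((size (undup F))%:R ^+ 2 * delta + 8 * En / M)%:E)%E.
Proof.
move=> rho1P rho2P delta0 close; apply: esum_le_of_uniq_sums => X uX.
rewrite sumEFin lee_fin (bigID (in_block F)) /=; apply: lerD.
  by apply: block_sum_le => // p; exact: sqmod_ge0.
apply: le_trans (_ : _ <= \sum_(p <- X | ~~ in_block F p)
  (2 * sqmod (rho1 p.1 p.2) + 2 * sqmod (rho2 p.1 p.2))) _.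
  by apply: ler_sum => p _; exact: sqmodB_le.
rewrite big_split /= -!mulr_sumr.
have := off_block_sum_le rho1P uX; have := off_block_sum_le rho2P uX; lra.
Qed.
End LowEnergyIndices.
End HilbertSchmidtEstimate.

Lemma hs_norm_lt {R : realType} {I : countType} (A : I -> I -> R[i]) (eps : R) :
  0 < eps -> (hs_norm2 A < (eps ^+ 2)%:E)%E -> (hs_norm A < eps%:E)%E.
Proof.
move=> eps0 A_lt; rewrite /hs_norm (lt_trans A_lt (ltry _)).
have : (0 <= hs_norm2 A)%E by apply: esum_ge0 => p _; rewrite lee_fin sqmod_ge0.
move: A_lt; case: (hs_norm2 A) => // r; rewrite lte_fin lee_fin => r_lt r0 /=.
by rewrite lte_fin -(ger0_norm (ltW eps0)) -sqrtr_sqr ltr_sqrt ?exprn_gt0.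
Qed.

Theorem mainTheorem9 (R : realType) (I : countType) (Ev : I -> R)
  (Hpos : forall i, 0 <= Ev i)
  (Hspec : no_inf_dim_bounded_subspace Ev)
  (En : R) (HEn : 0 < En)
  (rho : nat -> I -> I -> R[i])
  (Hrho : forall k, PE Ev En (rho k)) :
  exists phi : nat -> nat, (forall k, (phi k < phi k.+1)%N) /\
    hs_cauchy (fun k => rho (phi k)).
Proof.
have [phi phi_incr rho_phi] := density_entrywise_cauchy (fun k => (Hrho k).1).
exists phi; split => // eps eps0.
(* M and delta make the tail contribute eps^2 / 2 and the block at most eps^2 / 4 *)
pose M := 16 * En / eps ^+ 2; have M0 : 0 < M by rewrite divr_gt0 ?mulr_gt0 ?exprn_gt0.
have [F F_low] := low_energy_finite Hpos Hspec M.
have F_out i : i \notin F -> M < Ev i by rewrite ltNge; apply: contra (F_low i).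
pose K := (size (undup F))%:R : R; pose delta := eps ^+ 2 / (4 * (K ^+ 2 + 1)).
have delta0 : 0 < delta by rewrite divr_gt0 ?exprn_gt0 ?mulr_gt0 ?ltr_wpDl ?sqr_ge0.
have [N HN] := eventually2_in_seq
  (fun p m n => sqmod (rho (phi m) p.1 p.2 - rho (phi n) p.1 p.2) <= delta)
  [seq (i, j) | i <- F, j <- F] (fun p => rho_phi p.1 p.2 delta delta0).
exists N => m n Nm Nn; apply: hs_norm_lt => //.
apply: le_lt_trans (hs_norm2_sub_le Hpos M0 F_out (Hrho _) (Hrho _) (ltW delta0) _) _.
  by move=> i j iF jF; exact: (HN (i, j) (allpairs_f pair iF jF)).
have K_delta : K ^+ 2 * delta <= eps ^+ 2 / 4.
  rewrite /delta mulrA ler_pdivrMr ?mulr_gt0 ?ltr_wpDl ?sqr_ge0 //.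
  have := sqr_ge0 eps; nra.
have En_M : 8 * En / M = eps ^+ 2 / 2 by rewrite /M; field; rewrite ?gt_eqF ?exprn_gt0.
rewrite lte_fin; have := exprn_gt0 2 eps0; lra.
Qed.
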